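(* Let $G$ be a finite graph that admits a distinguishing edge coloring and has a non-identity automorphism. Then $$\theta'(G)=\max\{\,|\alpha|_e \;:\; \alpha\in\mathrm{Aut}(G)\setminus\{\mathrm{id}\}\,\}+1.$$
   Context: All graphs are finite and simple. An automorphism $\alpha$ of $G$ acts on edges by $\alpha(uv)=\alpha(u)\alpha(v)$. $|\alpha|_e$ denotes the number of cycles, including cycles of length 1 (fixed edges), in the cycle decomposition of the permutation that $\alpha$ induces on $E(G)$. An edge coloring with $k$ colors is a surjective map $c:E(G)\to\{1,\dots,k\}$. It is distinguishing if the only automorphism preserving all edge colors is the identity. $\theta'(G)$ is the least integer $k$ such that every edge coloring of $G$ using exactly $k$ colors is distinguishing. *)

From mathcomp Require Import all_boot all_fingroup.
Set Implicit Arguments.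
Unset Strict Implicit.
Unset Printing Implicit Defensive.

Section EdgeDist.
Variables (V : finType) (e : rel V).

Definition is_aut (a : {perm V}) : bool :=
  [forall x, forall y, e (a x) (a y) == e x y].

Definition edges : {set {set V}} :=
  [set A : {set V} | [exists x, exists y, e x y && (A == [set x; y])]].

Definition edge_map (a : {perm V}) (A : {set V}) : {set V} := a @: A.

(* |alpha|_e : number of cycles (orbits, incl. fixed edges) of the induced
   permutation on E(G) *)
Definition num_edge_cycles (a : {perm V}) : nat :=
  #|[set [set B in edges | fconnect (edge_map a) A B] | A in edges]|.

(* an edge coloring with exactly k colors (colors 'I_k, i.e. {0..k-1}):
   only its values on edges matter; surjective onto the colors *)
Definition edge_coloring (k : nat) (c : {set V} -> 'I_k) : Prop :=
  forall i : 'I_k, exists2 A, A \in edges & c A = i.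

Definition distinguishing (k : nat) (c : {set V} -> 'I_k) : Prop :=
  forall a : {perm V}, is_aut a ->
    (forall A, A \in edges -> c (edge_map a A) = c A) -> a = 1%g.

Definition all_colorings_dist (k : nat) : Prop :=
  forall c : {set V} -> 'I_k, edge_coloring c -> distinguishing c.

Definition is_theta' (t : nat) : Prop :=
  0 < t /\ all_colorings_dist t /\
  (forall k, 0 < k -> k < t -> ~ all_colorings_dist k).

End EdgeDist.

From mathcomp Require Import all_boot all_fingroup.

Set Implicit Arguments.
Unset Strict Implicit.
Unset Printing Implicit Defensive.

(** A coloring preserved by an automorphism [a] is constant on the cycles of
    [a] on edges, so it uses at most [|a|_e] colors: with [M + 1] colors,
    where [M] is the maximum of [|a|_e] over non-identity automorphisms, no
    non-identity automorphism survives.  Conversely, if [a] attains [M], then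
    coloring each edge by the index of its cycle (merging the surplus cycles
    into the last color) yields, for every [k <= M], a [k]-coloring preserved
    by [a], hence not distinguishing. *)

Section EdgeCycles.
Variables (V : finType) (e : rel V) (a : {perm V}).

Definition edge_cycle (A : {set V}) : {set {set V}} :=
  [set B in edges e | fconnect (edge_map a) A B].

Definition edge_cycles : {set {set {set V}}} := edge_cycle @: edges e.

Lemma card_edge_cycles : #|edge_cycles| = num_edge_cycles e a.
Proof. by []. Qed.

Lemma edge_map_inj : injective (edge_map a).
Proof. exact: imset_inj (@perm_inj _ a). Qed.

Lemma edge_map_edges A : is_aut e a -> A \in edges e -> edge_map a A \in edges e.
Proof.
move=> /forallP aut_a; rewrite !inE => /existsP[x /existsP[y /andP[exy /eqP->]]].
apply/existsP; exists (a x); apply/existsP; exists (a y).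
have /forallP /(_ y) /eqP -> := aut_a x.
by rewrite exy /= /edge_map imsetU1 imset_set1.
Qed.

Lemma edge_cycle_map A : edge_cycle (edge_map a A) = edge_cycle A.
Proof.
apply/setP => B; rewrite !inE; congr (_ && _).
by rewrite -(same_fconnect1 edge_map_inj).
Qed.

Lemma mem_edge_cycle A : A \in edges e -> A \in edge_cycle A.
Proof. by move=> EA; rewrite inE EA connect0. Qed.

Section InvariantColoring.
Variables (k : nat) (c : {set V} -> 'I_k).
Hypotheses (aut_a : is_aut e a)
           (c_inv : forall A, A \in edges e -> c (edge_map a A) = c A).

Lemma edge_cycle_color A B : A \in edges e -> B \in edge_cycle A -> c B = c A.
Proof.
move=> EA; rewrite inE => /andP[_ /iter_findex <-].
elim: (findex _ A B) => [|n IHn] //=.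
have En : iter n (edge_map a) A \in edges e.
  by elim: n {IHn} => //= n En; apply: edge_map_edges.
by rewrite c_inv.
Qed.

Lemma invariant_coloring_le_cycles : edge_coloring e c -> k <= #|edge_cycles|.
Proof.
move=> c_onto; pose color (X : {set {set V}}) := c (odflt set0 [pick B in X]).
rewrite -[k]card_ord; apply: leq_trans (leq_imset_card color _).
apply/subset_leq_card/subsetP => i _; have [A EA cA] := c_onto i.
apply/imsetP; exists (edge_cycle A); first exact: imset_f.
rewrite /color; case: pickP => [B /= AB|/(_ A)]; last by rewrite mem_edge_cycle.
by rewrite (edge_cycle_color EA AB).
Qed.

End InvariantColoring.

(* Cycles are numbered by their position in [enum edge_cycles]; all cycles of
   index at least [k] receive the last color [k]. *)
Definition cycle_coloring (k : nat) (A : {set V}) : 'I_k.+1 :=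
  inord (minn (index (edge_cycle A) (enum edge_cycles)) k).

Lemma cycle_coloring_map k A : cycle_coloring k (edge_map a A) = cycle_coloring k A.
Proof. by rewrite /cycle_coloring edge_cycle_map. Qed.

Lemma cycle_coloring_onto k :
  k < #|edge_cycles| -> edge_coloring e (cycle_coloring k).
Proof.
move=> k_lt i; have i_lt : i < size (enum edge_cycles).
  by rewrite -cardE (leq_trans (ltn_ord i)).
have /imsetP[A EA defA] : nth set0 (enum edge_cycles) i \in edge_cycles.
  by rewrite -mem_enum mem_nth.
exists A => //; apply: val_inj.
rewrite /cycle_coloring -defA index_uniq ?enum_uniq //.
have -> : minn i k = i by apply/minn_idPl; rewrite -ltnS.
by rewrite /= inordK.
Qed.

Lemma not_all_colorings_dist k :
  is_aut e a -> a != 1%g -> k < #|edge_cycles| -> ~ all_colorings_dist e k.+1.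
Proof.
move=> aut_a nontriv k_lt all_dist; move/eqP: nontriv; apply.
apply: (all_dist _ (cycle_coloring_onto k_lt) a aut_a) => A _.
exact: cycle_coloring_map.
Qed.

End EdgeCycles.

Theorem mainTheorem2 (V : finType) (e : rel V) :
  symmetric e -> irreflexive e ->
  (exists k (c : {set V} -> 'I_k), edge_coloring e c /\ distinguishing e c) ->
  (exists a : {perm V}, is_aut e a && (a != 1%g)) ->
  is_theta' e
    ((\max_(a : {perm V} | is_aut e a && (a != 1%g)) num_edge_cycles e a).+1).
Proof.
move=> _ _ _ [a0 nontriv_a0].
set M := \max_(a | _) _.
split=> //; split.
  move=> c c_onto a aut_a c_inv; apply/eqP; apply: contraT => nontriv_a.
  have a_le_M : num_edge_cycles e a <= M.
    by apply: (leq_bigmax_cond (P := fun a => is_aut e a && (a != 1%g))); rewrite aut_a.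
  have := invariant_coloring_le_cycles aut_a c_inv c_onto.
  by rewrite card_edge_cycles ltnNge a_le_M.
move=> [//|k] _ k_lt_M.
have : M = num_edge_cycles e
    [arg max_(a > a0 | is_aut e a && (a != 1%g)) num_edge_cycles e a].
  exact: bigmax_eq_arg.
case: arg_maxnP => // a /andP[aut_a nontriv_a] _ defM.
apply: (not_all_colorings_dist aut_a nontriv_a).
by rewrite card_edge_cycles -defM.
Qed.
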